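(* For integers $r\geq 3$ and $n\geq 2r+3$, the complex $\Delta_2^t(C_n^r)$ is simply connected, i.e. $\pi_1(\Delta_2^t(C_n^r))\cong 0$.
   Context: All graphs are finite and simple; $\alpha(G)$ is the independence number and $G[S]$ the induced subgraph on $S$. $\Delta_2^t(G)=\{\sigma\subseteq V(G):\ \alpha(G[V(G)\setminus\sigma])\geq 2\}$. $C_n$ is the cycle on $\{1,\dots,n\}$ with edges $\{i,i+1\}$ and $\{1,n\}$; $C_n^r$ is the graph on the same vertices where distinct vertices are adjacent iff their distance in $C_n$ is at most $r$. *)

From HB Require Import structures.
From mathcomp Require Import all_boot all_order all_algebra.
From mathcomp Require Import all_classical all_reals all_analysis.
Import numFieldNormedType.Exports.
Set Implicit Arguments. Unset Strict Implicit. Unset Printing Implicit Defensive.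
Import Order.TTheory GRing.Theory Num.Theory.

(* A simple graph on a finType T is given by an adjacency relation e
   (for the graphs below it is symmetric and irreflexive). *)

Definition independent (T : finType) (e : rel T) (A : {set T}) : bool :=
  [forall x in A, forall y in A, ~~ e x y].

Definition alpha_induced (T : finType) (e : rel T) (S : {set T}) : nat :=
  \max_(A : {set T} | (A \subset S) && independent e A) #|A|.

Definition Delta2t (T : finType) (e : rel T) : {set {set T}} :=
  [set sigma : {set T} | 2 <= alpha_induced e (~: sigma)].

(* Vertices 1..n of C_n are represented by 0..n-1 in 'I_n.
   Distance in C_n between i and j. *)
Definition cycle_dist (n : nat) (i j : 'I_n) : nat :=
  let d := if i <= j then j - i else i - j in minn d (n - d).

Definition Cnr (n r : nat) : rel 'I_n :=
  fun i j => (i != j) && (cycle_dist i j <= r).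

Local Open Scope ring_scope.
Local Open Scope classical_set_scope.

(* Geometric realization of a simplicial complex K on vertex set 'I_n,
   as a subspace of R^n (row vectors, product/matrix topology): points
   with nonnegative barycentric coordinates summing to 1 whose support
   is a face of K. *)
Definition realization (R : realType) (n : nat) (K : {set {set 'I_n}})
  : set 'rV[R]_n :=
  [set x | (forall i, 0 <= x ord0 i) /\ \sum_i x ord0 i = 1 /\
           finset (fun i => x ord0 i != 0) \in K].
Arguments realization R n K : clear implicits.

Definition unit_interval (R : realType) : set R := `[0%R, 1%R].
Arguments unit_interval R : clear implicits.

Definition simply_connected (R : realType) (V : topologicalType) (X : set V)
  : Prop :=
  X !=set0 /\
  (forall x y, X x -> X y ->
     exists g : R -> V, {within (unit_interval R), continuous g} /\
       (forall s, unit_interval R s -> X (g s)) /\ g 0 = x /\ g 1 = y) /\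
  (forall f : R -> V, {within (unit_interval R), continuous f} ->
     (forall s, unit_interval R s -> X (f s)) -> f 0 = f 1 ->
     exists H : R * R -> V,
       {within (unit_interval R `*` unit_interval R), continuous H} /\
       (forall p, (unit_interval R `*` unit_interval R) p -> X (H p)) /\
       (forall s, unit_interval R s -> H (s, 0) = f s /\ H (s, 1) = f 0) /\
       (forall t, unit_interval R t -> H (0, t) = f 0 /\ H (1, t) = f 0)).

(* Every set of at most three vertices is a face of Delta_2^t(C_n^r): it misses one of
   the four pairwise disjoint non-edges {k, k + r + 1}, k < 4.  So the complex contains
   the full 2-skeleton of the simplex on its vertices, and any such complex is simply
   connected.  Paths and homotopies are built by linear interpolation, which stays in
   the realization as long as consecutive points have supports whose union is a face.
   A point is joined to its heaviest vertex, which lies in its support.  A loop f based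
   at p is deformed first into the piecewise-linear loop g through the heaviest vertices
   of f on a subdivision of [0, 1] fine enough (by uniform continuity) that these
   vertices and supp p stay in the support of f nearby, then into the loop c that only
   visits p and one vertex v0 of supp p, then into the constant loop: at each time the
   union of the supports of two consecutive stages lies in supp (f s), in supp p, or
   has at most three elements. *)

From mathcomp Require Import all_boot all_order all_algebra.
From mathcomp Require Import all_classical all_reals all_analysis.
From mathcomp Require Import zify ring lra.
Import numFieldNormedType.Exports.
Import Order.TTheory GRing.Theory Num.Theory.

Set Implicit Arguments.
Unset Strict Implicit.
Unset Printing Implicit Defensive.

Definition down_closed (T : finType) (K : {set {set T}}) :=
  forall s t : {set T}, s \subset t -> t \in K -> s \in K.

Section Delta2tFaces.
Variables (T : finType) (e : rel T).

Lemma Delta2t_down_closed : down_closed (Delta2t e).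
Proof.
move=> s t st; rewrite !inE => /leq_trans; apply.
apply/bigmax_leqP => A /andP[At indA].
apply: leq_bigmax_cond; rewrite indA andbT.
by apply: fintype.subset_trans At _; rewrite finset.setCS.
Qed.

Hypotheses (e_irr : irreflexive e) (e_sym : symmetric e).

Lemma Delta2t_nonedge (s : {set T}) a b :
  a != b -> a \notin s -> b \notin s -> ~~ e a b -> s \in Delta2t e.
Proof.
move=> ab as_ bs eab; rewrite inE /alpha_induced.
have -> : 2 = #|[set a; b]| by rewrite cards2 ab.
apply: leq_bigmax_cond; apply/andP; split.
  by apply/fintype.subsetP => x; rewrite !inE => /orP[]/eqP->.
apply/forallP => x; apply/implyP; rewrite !inE => /orP[]/eqP->;
apply/forallP => y; apply/implyP; rewrite !inE => /orP[]/eqP->;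
by rewrite ?e_irr // e_sym.
Qed.

End Delta2tFaces.

Lemma exists_block_disjoint (T : finType) m (B : 'I_m -> {set T}) (s : {set T}) :
  (forall i j, i != j -> [disjoint B i & B j]) -> (#|s| < m)%N ->
  exists i, [disjoint B i & s].
Proof.
move=> Bdisj sm; apply/existsP; apply: contraLR sm; rewrite negb_exists -leqNgt.
move=> /forallP meet; have /fin_all_exists [h hBs] : forall i, exists x, x \in B i :&: s.
  by move=> i; apply/set0Pn; rewrite setI_eq0 meet.
have hB i : h i \in B i by have := hBs i; rewrite inE => /andP[].
have hs i : h i \in s by have := hBs i; rewrite inE => /andP[].
have h_inj : injective h.
  move=> i j hij; apply/eqP; apply: contraT => /Bdisj /disjointFr/(_ (hB i)).
  by rewrite hij hB.
rewrite -[m]card_ord -(card_imset _ h_inj) subset_leq_card //.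
by apply/fintype.subsetP => _ /imsetP[i _ ->]; exact: hs.
Qed.

Lemma cycle_distC n (i j : 'I_n) : cycle_dist i j = cycle_dist j i.
Proof. by rewrite /cycle_dist; do 2 case: ifP; lia. Qed.

Lemma Cnr_irr n r : irreflexive (@Cnr n r).
Proof. by move=> i; rewrite /Cnr eqxx. Qed.

Lemma Cnr_sym n r : symmetric (@Cnr n r).
Proof. by move=> i j; rewrite /Cnr eq_sym cycle_distC. Qed.

Lemma Cnr_far n r (i j : 'I_n) : (i + r < j)%N -> (j + r < n + i)%N -> ~~ Cnr r i j.
Proof. by move=> ij ji; rewrite /Cnr /cycle_dist; case: ifP; lia. Qed.

Lemma Cnr_small_face n r (s : {set 'I_n.+1}) :
  (3 <= r)%N -> (2 * r + 2 <= n.+1)%N -> (#|s| <= 3)%N -> s \in Delta2t (@Cnr n.+1 r).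
Proof.
move=> r3 rn s3.
have inordE k l : (k <= n)%N -> (l <= n)%N -> (inord k == inord l :> 'I_n.+1) = (k == l).
  by move=> kn ln; rewrite -val_eqE /= !inordK.
pose B (k : 'I_4) : {set 'I_n.+1} := [set inord k; inord (k + r.+1)].
have memB (k : 'I_4) x : (x \in B k) = (x == k :> nat) || (x == k + r.+1 :> nat).
  by have k4 := ltn_ord k; rewrite !inE -!val_eqE /= !inordK //; lia.
have Bdisj i j : i != j -> [disjoint B i & B j].
  rewrite -val_eqE /= => ij; apply/pred0P => x /=; rewrite !memB.
  by have := ltn_ord i; have := ltn_ord j; lia.
have [k] : exists k, [disjoint B k & s].
  by apply: exists_block_disjoint => //; lia.
have := ltn_ord k => k4.
rewrite disjoint_subset => /fintype.subsetP Bs.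
have [as_ bs] : inord k \notin s /\ inord (k + r.+1) \notin s.
  by split; apply: Bs; rewrite !inE eqxx ?orbT.
apply: (Delta2t_nonedge (@Cnr_irr _ r) (@Cnr_sym _ r) _ as_ bs).
  by rewrite inordE; lia.
by apply: Cnr_far; rewrite !inordK; lia.
Qed.

Section Hat.
Context {R : realType}.
Local Open Scope ring_scope.
Implicit Types (x u : R) (M : nat).

Definition hat x : R := Num.max 0 (1 - `|x|).

Lemma hat_ge0 x : 0 <= hat x.
Proof. by rewrite /hat le_max lexx. Qed.

Lemma hat_eq0 x : 1 <= `|x| -> hat x = 0.
Proof. by move=> x1; rewrite /hat max_l // subr_le0. Qed.

Lemma hatE x : `|x| <= 1 -> hat x = 1 - `|x|.
Proof. by move=> x1; rewrite /hat max_r // subr_ge0. Qed.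

Lemma hat_neq0 x : hat x != 0 -> `|x| < 1.
Proof. by apply: contraNT; rewrite -leNgt => /hat_eq0 ->. Qed.

Lemma hat_nat (i j : nat) : hat (i%:R - j%:R) = (i == j)%:R.
Proof.
have [->|ij] := eqVneq i j; first by rewrite subrr hatE normr0 ?subr0.
apply: hat_eq0; move: ij; rewrite neq_ltn => /orP[] lt;
  move: lt; rewrite -(ler_nat R) -natr1 => lt.
- by rewrite distrC ger0_norm; lra.
- by rewrite ger0_norm; lra.
Qed.

Lemma hat_continuous : continuous hat.
Proof.
have -> : hat = (fun=> 0) \max (fun x => 1 - `|x|) by [].
apply: max_fun_continuous; first exact: cst_continuous.
by move=> x; apply: continuousB; [exact: cst_continuous | exact: norm_continuous].
Qed.

Lemma hat_active u (k : nat) : 0 <= u -> hat (u - k%:R) != 0 ->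
  k = Num.truncn u \/ k = (Num.truncn u).+1.
Proof.
move=> u0 /hat_neq0; rewrite ltr_norml => /andP[lo hi].
have /andP[tu ut] := truncn_itv u0; rewrite -natr1 in ut.
have : (k < (Num.truncn u).+2)%N by rewrite -(ltr_nat R) -!natr1; lra.
have : (Num.truncn u < k.+1)%N by rewrite -(ltr_nat R) -natr1; lra.
lia.
Qed.

Lemma hat_partition M u : 0 <= u <= M%:R -> \sum_(i < M.+1) hat (u - i%:R) = 1.
Proof.
elim: M u => [|M IH] u /andP[u0 uM].
  have -> : u = 0 by apply/eqP; rewrite eq_le uM u0.
  by rewrite big_ord1 subr0 hatE normr0 ?subr0.
rewrite big_ord_recr /=; move: uM; rewrite -natr1 => uM.
have [uM'|Mu] := lerP u M%:R.
  by rewrite IH ?u0 // hat_eq0 ?addr0 // distrC ger0_norm; lra.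
rewrite big_ord_recr /= big1 => [|i _]; last first.
  have := ltn_ord i; rewrite -(ler_nat R) -natr1 => iM.
  by apply: hat_eq0; rewrite ger0_norm; lra.
have hM : hat (u - M%:R) = 1 - (u - M%:R) by rewrite hatE ger0_norm; lra.
have hM1 : hat (u - (M%:R + 1)) = 1 - (M%:R + 1 - u).
  by rewrite hatE distrC ger0_norm; lra.
by rewrite add0r hM hM1; lra.
Qed.

End Hat.

Section Interpolation.
Context {R : realType} {V : lmodType R}.
Local Open Scope ring_scope.
Implicit Types (M : nat) (Q : nat -> V) (u : R).

Definition interp M Q u : V := \sum_(i < M.+1) hat (u - i%:R) *: Q i.

Lemma interp_nat M Q j : (j <= M)%N -> interp M Q j%:R = Q j.
Proof.
move=> jM; rewrite /interp (bigD1 (Ordinal (jM : (j < M.+1)%N))) //=.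
rewrite hat_nat eqxx scale1r big1 ?addr0 // => i.
by rewrite -val_eqE /= eq_sym hat_nat => /negPf ->; rewrite scale0r.
Qed.

Lemma interp0 M Q : interp M Q 0 = Q 0%N.
Proof. by rewrite -(interp_nat Q (leq0n M)). Qed.

Lemma interp_cst M Q (p : V) u : (forall k, Q k = p) -> 0 <= u <= M%:R ->
  interp M Q u = p.
Proof.
move=> Qp uM; rewrite /interp; under eq_bigr do rewrite Qp.
by rewrite -scaler_suml hat_partition // scale1r.
Qed.

End Interpolation.

Section InterpolationContinuity.
Context {R : realType} {V : normedModType R}.
Local Open Scope ring_scope.
Local Open Scope classical_set_scope.

Lemma cvg_interp (T : Type) (F : set_system T) {FF : Filter F} M
    (Q : nat -> T -> V) (q : nat -> V) (u : T -> R) (u0 : R) :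
  (forall k, Q k @ F --> q k) -> u @ F --> u0 ->
  (fun z => interp M (Q ^~ z) (u z)) @ F --> interp M q u0.
Proof.
move=> Qq uu; apply: cvg_big => [|k _]; first exact: add_continuous.
apply: cvgZ (Qq k); apply: continuous_cvg; first exact: hat_continuous.
exact: cvgB uu (cvg_cst _).
Qed.

Lemma interp_continuous M (Q : nat -> V) (a : R) :
  continuous (fun s => interp M Q (a * s)).
Proof.
move=> s; apply: (cvg_interp (Q := fun k _ => Q k)) => [k|]; first exact: cvg_cst.
by apply: cvgM; [exact: cvg_cst | exact: cvg_id].
Qed.

End InterpolationContinuity.

Section Simplex.
Context {R : realType} {m : nat}.
Local Open Scope ring_scope.
Implicit Types (x : 'rV[R]_m) (M : nat) (Q : nat -> 'rV[R]_m) (u : R).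

Definition simplex : set 'rV[R]_m :=
  [set x | (forall i, 0 <= x ord0 i) /\ \sum_i x ord0 i = 1].

Definition supp x : {set 'I_m} := [set i | x ord0 i != 0].

Lemma in_supp x i : (i \in supp x) = (x ord0 i != 0).
Proof. by rewrite /supp inE. Qed.

Definition heavy (eps : R) x : {set 'I_m} := [set i | eps <= x ord0 i].

Lemma in_heavy eps x i : (i \in heavy eps x) = (eps <= x ord0 i).
Proof. by rewrite /heavy inE. Qed.

Lemma realizationP K x : realization R m K x <-> simplex x /\ supp x \in K.
Proof. by split=> [[x0 [x1 xK]] | [[x0 x1] xK]]. Qed.

Lemma simplex_delta v : simplex (delta_mx ord0 v).
Proof.
split=> [i|]; first by rewrite mxE ler0n.
rewrite (bigD1 v) //= mxE !eqxx big1 ?addr0 // => i /negPf iv.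
by rewrite mxE iv.
Qed.

Lemma supp_delta v : supp (delta_mx ord0 v) = [set v].
Proof.
apply/finset.setP => i; rewrite in_supp inE mxE eqxx /=.
by case: (eqVneq i v); rewrite ?oner_eq0 ?eqxx.
Qed.

Lemma interp_coord M Q u i :
  interp M Q u ord0 i = \sum_(k < M.+1) hat (u - k%:R) * Q k ord0 i.
Proof. by rewrite summxE; apply: eq_bigr => k _; rewrite mxE. Qed.

Lemma simplex_interp M Q u :
  (forall k, simplex (Q k)) -> 0 <= u <= M%:R -> simplex (interp M Q u).
Proof.
move=> Qs uM; split=> [i|].
  rewrite interp_coord; apply: sumr_ge0 => k _.
  by apply: mulr_ge0; [exact: hat_ge0 | case: (Qs k)].
under eq_bigr do rewrite interp_coord.
rewrite exchange_big /= -[RHS](hat_partition uM); apply: eq_bigr => k _.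
by rewrite -mulr_sumr; case: (Qs k) => _ ->; rewrite mulr1.
Qed.

Lemma supp_interp M Q u i : i \in supp (interp M Q u) ->
  exists k, [/\ (k <= M)%N, hat (u - k%:R) != 0 & i \in supp (Q k)].
Proof.
rewrite in_supp interp_coord => /eqP nz.
case: (pickP (fun k : 'I_M.+1 => hat (u - k%:R) * Q k ord0 i != 0)) => [k|none].
  rewrite mulf_eq0 negb_or -in_supp => /andP[hk ik].
  by exists k; split; rewrite // -ltnS.
by case: nz; apply: big1 => k _; apply/eqP/negbFE/none.
Qed.

Lemma supp_interp_sub M Q u : 0 <= u ->
  supp (interp M Q u) \subset supp (Q (Num.truncn u)) :|: supp (Q (Num.truncn u).+1).
Proof.
move=> u0; apply/fintype.subsetP => i /supp_interp[k [_ hk ik]].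
by case: (hat_active u0 hk) => <-; rewrite inE ik ?orbT.
Qed.

Lemma realization_interp K M Q u : down_closed K ->
  (forall k, simplex (Q k)) -> (forall a, supp (Q a) :|: supp (Q a.+1) \in K) ->
  0 <= u <= M%:R -> realization R m K (interp M Q u).
Proof.
move=> Kd Qs QK /[dup] uM /andP[u0 _]; apply/realizationP.
by split; [exact: simplex_interp | exact: Kd (supp_interp_sub _ _ u0) (QK _)].
Qed.

End Simplex.

Section TopVertex.
Context {R : realType} {n : nat}.
Local Open Scope ring_scope.
Implicit Types (x : 'rV[R]_n.+1).

Definition top_vertex x : 'I_n.+1 := [arg max_(i > ord0) x ord0 i]%O.

Lemma top_vertex_ge x : simplex x -> n.+1%:R^-1 <= x ord0 (top_vertex x).
Proof.
move=> [_ x1]; rewrite /top_vertex; case: arg_maxP => // j _ jmax.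
rewrite -(ler_pM2l (ltr0Sn R n)) mulfV ?pnatr_eq0 // -[leLHS]x1 mulr_natl.
have -> : x ord0 j *+ n.+1 = \sum_(i < n.+1) x ord0 j by rewrite sumr_const card_ord.
by apply: ler_sum => i _; exact: jmax.
Qed.

Lemma top_vertex_supp x : simplex x -> top_vertex x \in supp x.
Proof.
move=> xs; rewrite in_supp gt_eqF //; apply: lt_le_trans (top_vertex_ge xs).
by rewrite invr_gt0 ltr0Sn.
Qed.

End TopVertex.

Section TopologyFacts.
Local Open Scope ring_scope.
Local Open Scope classical_set_scope.

Lemma unit_intervalP {R : realType} (s : R) : unit_interval R s <-> 0 <= s <= 1.
Proof. by rewrite /unit_interval /= in_itv. Qed.

Lemma unit_interval_frac {R : realType} (i N : nat) : (i <= N)%N -> (0 < N)%N ->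
  unit_interval R (i%:R / N%:R).
Proof.
move=> iN N0; apply/unit_intervalP; rewrite divr_ge0 ?ler0n //=.
by rewrite ler_pdivrMr ?ltr0n // mul1r ler_nat.
Qed.

Lemma entry_norm_le {K : realFieldType} m n (x : 'M[K]_(m, n)) i j : `|x i j| <= `|x|.
Proof. by rewrite [`|x|]mx_normrE (le_bigmax _ _ (i, j)). Qed.

Lemma cvg_fst_within (T U : topologicalType) (A : set T) (B : set U) (z : T * U) :
  fst @ within (A `*` B) (nbhs z) --> within A (nbhs z.1).
Proof.
case: z => x y /= S /(@cvg_fst _ _ (nbhs x) (nbhs y) _ _) /=.
rewrite /within => -[[P Q] /= [Px Qy] PQ].
by exists (P, Q) => //= -[a b] /= [Pa Qb] [Aa Bb]; exact: (PQ (a, b)).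
Qed.

Lemma cvg_within_continuous (T U : topologicalType) (A : set T) (h : T -> U) (z : T) :
  continuous h -> h @ within A (nbhs z) --> h z.
Proof. by move=> hc; apply: cvg_trans (hc z); apply: cvg_fmap2; exact: cvg_within. Qed.

Lemma segment_unif_continuous {R : realType} {V : normedModType R} (f : R -> V) (a b : R) :
  {within `[a, b], continuous f} -> forall e, 0 < e -> exists2 d, 0 < d &
   forall s t, `[a, b] s -> `[a, b] t -> `|s - t| < d -> `|f s - f t| < e.
Proof.
move=> fc e e0; set A := `[a, b] : set R.
have e20 : 0 < e / 2 by rewrite divr_gt0.
pose good (q : R * R) := 0 < q.2 /\
  forall y, A y -> `|q.1 - y| < 2 * q.2 -> `|f q.1 - f y| < e / 2.
have : compact A by exact: segment_compact.
rewrite compact_cover => /(_ _ good (fun q => ball q.1 q.2)) [].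
- by move=> q _; exact: ball_open.
- move=> x Ax; have /cvgr_dist_lt/(_ _ e20) := (subspace_continuousP A f).1 fc x Ax.
  rewrite nearE /within /= => /nbhs_ballP[d d0 xd].
  exists (x, d / 2); last by apply: ballxx; rewrite divr_gt0.
  split=> [|y Ay]; first by rewrite /= divr_gt0.
  by rewrite /= mulrC -mulrA mulVf ?mulr1 // => xy; apply: xd.
move=> D' D'good cover.
exists (\big[Order.min/1]_(q <- finmap.enum_fset D') q.2).
  rewrite big_seq_cond; apply: lt_bigmin => // q /andP[qD' _].
  by case: (set_mem (D'good q qD')).
move=> s t As At st.
have [q qD' sq] := cover s As.
have [q0 qgood] := set_mem (D'good q qD').
have dq := ge_bigmin_seq 1 _ xpredT (fun q : R * R => q.2) qD' isT.
have qs : `|q.1 - s| < q.2 by move: sq; rewrite -ball_normE.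
have fqs : `|f q.1 - f s| < e / 2 by apply: qgood => //; lra.
have fqt : `|f q.1 - f t| < e / 2.
  by apply: qgood => //; apply: le_lt_trans (ler_distD s _ _) _; lra.
have -> : f s - f t = (f q.1 - f t) - (f q.1 - f s).
  by rewrite opprB [RHS]addrC [RHS]addrA subrK.
by apply: le_lt_trans (ler_normB _ _) _; rewrite (splitr e); apply: ltrD.
Qed.

End TopologyFacts.

Section Realization.
Context {R : realType} {n : nat} (K : {set {set 'I_n.+1}}).
Hypotheses (K_down : down_closed K)
  (K_small : forall s : {set 'I_n.+1}, (#|s| <= 3)%N -> s \in K).
Local Open Scope ring_scope.
Local Open Scope classical_set_scope.
Local Notation X := (realization R n.+1 K).
Local Notation I := (unit_interval R).

Lemma realization_neq0 : X !=set0.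
Proof.
exists (delta_mx ord0 ord0); apply/realizationP; split; first exact: simplex_delta.
by rewrite supp_delta; apply: K_small; rewrite cards1.
Qed.

Lemma realization_path x y : X x -> X y ->
  exists g : R -> 'rV[R]_n.+1, {within I, continuous g} /\
    (forall s, I s -> X (g s)) /\ g 0 = x /\ g 1 = y.
Proof.
move=> /realizationP[xs xK] /realizationP[ys yK].
pose Q := nth y [:: x; delta_mx ord0 (top_vertex x); delta_mx ord0 (top_vertex y)].
have Qs k : simplex (Q k).
  case: k => [|[|[|k]]]; rewrite /Q /= ?nth_nil //; exact: simplex_delta.
have QK a : supp (Q a) :|: supp (Q a.+1) \in K.
  case: a => [|[|[|a]]]; rewrite /Q /= ?nth_nil ?supp_delta ?finset.setUid //.
  - by apply: K_down xK; rewrite finset.subUset subxx finset.sub1set top_vertex_supp.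
  - by apply: K_small; rewrite (leq_trans (leq_card_setU _ _)) // !cards1.
  - by apply: K_down yK; rewrite finset.subUset subxx finset.sub1set top_vertex_supp.
exists (fun s => interp 3%N Q (3 * s)); split; [|split; [|split]].
- by apply: continuous_subspaceT; exact: interp_continuous.
- move=> s /unit_intervalP/andP[s0 s1]; apply: realization_interp => //.
  by apply/andP; split; lra.
- by rewrite /= mulr0 interp0.
- by rewrite /= mulr1 (interp_nat Q (leqnn 3)).
Qed.

Section LoopContraction.
Variable f : R -> 'rV[R]_n.+1.
Hypotheses (f_cont : {within I, continuous f}) (f_in : forall s, I s -> X (f s))
  (f_loop : f 0 = f 1).

Let p := f 0.

Let I0 : I 0. Proof. by apply/unit_intervalP; rewrite lexx ler01. Qed.

Let f_simplex s : I s -> simplex (f s). Proof. by move/f_in/realizationP => []. Qed.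
Let f_face s : I s -> supp (f s) \in K. Proof. by move/f_in/realizationP => []. Qed.
Let p_simplex : simplex p. Proof. exact: f_simplex I0. Qed.

(* [eps] is below the weight of a heaviest vertex of any point of the simplex and
   below every nonzero weight of [p]. *)
Let eps := Num.min n.+1%:R^-1 (\big[Num.min/1]_(i in supp p) p ord0 i).

Let eps_gt0 : 0 < eps.
Proof.
rewrite lt_min invr_gt0 ltr0Sn; apply/bigmin_gtP; split=> // i.
rewrite in_supp => pi; rewrite lt_neqAle eq_sym pi.
by case: p_simplex => p0 _; rewrite p0.
Qed.

Let supp_p_heavy : supp p \subset heavy eps p.
Proof.
apply/fintype.subsetP => i ip; rewrite in_heavy ge_min; apply/orP; right.
exact: bigmin_le_cond.
Qed.

Let top_vertex_heavy (x : 'rV[R]_n.+1) : simplex x -> top_vertex x \in heavy eps x.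
Proof. by move=> xs; rewrite in_heavy ge_min top_vertex_ge. Qed.

Let heavy_near : exists2 d, 0 < d & forall s s', I s -> I s' -> `|s - s'| < d ->
  heavy eps (f s') \subset supp (f s).
Proof.
have [d d0 fd] := segment_unif_continuous f_cont eps_gt0.
exists d => // s s' Is Is' ss'; apply/fintype.subsetP => j.
rewrite in_heavy in_supp => fj.
have := le_lt_trans (entry_norm_le (f s - f s') ord0 j) (fd _ _ Is Is' ss').
by rewrite !mxE ltr_norml => /andP[lo _]; rewrite gt_eqF //; lra.
Qed.

Let fine_subdivision : exists2 N, (0 < N)%N & forall s i, I s -> (i <= N)%N ->
  hat (N%:R * s - i%:R) != 0 -> heavy eps (f (i%:R / N%:R)) \subset supp (f s).
Proof.
have [d d0 hd] := heavy_near; set N := (Num.truncn d^-1).+1.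
exists N => // s i Is iN /hat_neq0 hi.
apply: hd => //; first exact: unit_interval_frac.
have Nd : 1 < d * N%:R by rewrite -ltr_pdivrMl // mulr1 truncnS_gt.
have -> : s - i%:R / N%:R = (N%:R * s - i%:R) / N%:R by field; rewrite pnatr_eq0.
rewrite normrM normfV normr_nat ltr_pdivrMr ?ltr0n //.
exact: lt_trans hi Nd.
Qed.

Section FixedSubdivision.
Variable N : nat.
Hypotheses (N_gt0 : (0 < N)%N) (N_fine : forall s i, I s -> (i <= N)%N ->
  hat (N%:R * s - i%:R) != 0 -> heavy eps (f (i%:R / N%:R)) \subset supp (f s)).

(* The ends of the subdivision are sent to [p] itself, so that [g] and [c] are loops
   based at [p]. *)
Let endpoint i := (i == 0)%N || (N <= i)%N.
Let w i := if endpoint i then p else delta_mx ord0 (top_vertex (f (i%:R / N%:R))).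
Let w' i := if endpoint i then p else delta_mx ord0 (top_vertex p).
Let g s := interp N w (N%:R * s).
Let c s := interp N w' (N%:R * s).

Let w_simplex i : simplex (w i).
Proof. by rewrite /w; case: ifP => _; [exact: p_simplex | exact: simplex_delta]. Qed.

Let w'_simplex i : simplex (w' i).
Proof. by rewrite /w'; case: ifP => _; [exact: p_simplex | exact: simplex_delta]. Qed.

Let scaled_range s : I s -> 0 <= N%:R * s <= N%:R.
Proof.
move=> /unit_intervalP/andP[s0 s1]; rewrite mulr_ge0 ?ler0n //=.
by rewrite ler_piMr ?ler0n.
Qed.

Let f_endpoint i : endpoint i -> (i <= N)%N -> f (i%:R / N%:R) = p.
Proof.
move=> /orP[/eqP-> _|Ni iN]; first by rewrite mul0r.
have -> : i = N by apply/eqP; rewrite eqn_leq iN Ni.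
by rewrite divff ?pnatr_eq0 -?lt0n // /p f_loop.
Qed.

Let w_supp s i : I s -> (i <= N)%N -> hat (N%:R * s - i%:R) != 0 ->
  supp (w i) \subset supp (f s).
Proof.
move=> Is iN hi; have fine := N_fine Is iN hi; rewrite /w; case: ifP => ie.
  by rewrite (f_endpoint ie iN) in fine; exact: fintype.subset_trans supp_p_heavy fine.
rewrite supp_delta finset.sub1set; apply: (fintype.subsetP fine).
exact/top_vertex_heavy/f_simplex/unit_interval_frac.
Qed.

Let supp_g s : I s -> supp (g s) \subset supp (f s).
Proof.
move=> Is; apply/fintype.subsetP => j /supp_interp[k [kN hk jk]].
exact: fintype.subsetP (w_supp Is kN hk) _ jk.
Qed.

Let supp_c s : supp (c s) \subset supp p.
Proof.
apply/fintype.subsetP => j /supp_interp[k [_ _]]; rewrite /w'; case: ifP => // _.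
by rewrite supp_delta inE => /eqP->; exact: top_vertex_supp p_simplex.
Qed.

(* If an end of the subdivision is active at [s], then supp p lies in supp (f s),
   which contains everything; otherwise only the heaviest vertices at the two ends of
   the current subinterval and [top_vertex p] occur. *)
Let supp_gc s : I s -> supp (g s) :|: supp (c s) \in K.
Proof.
move=> Is; set u := N%:R * s; have /andP[u0 _] := scaled_range Is.
have [/existsP[k /andP[ek hk]]|/existsPn inner] :=
  boolP [exists k : 'I_N.+1, endpoint k && (hat (u - k%:R) != 0)].
  have pf : supp p \subset supp (f s) by have := w_supp Is (leq_ord k) hk; rewrite /w ek.
  apply: K_down (f_face Is); rewrite finset.subUset supp_g //=.
  exact: fintype.subset_trans (supp_c s) pf.
have inner' k : (k <= N)%N -> hat (u - k%:R) != 0 -> ~~ endpoint k.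
  by move=> kN hk; have := inner (Ordinal (kN : (k < N.+1)%N)); rewrite /= hk andbT.
set a := Num.truncn u; set vf := fun k => top_vertex (f (k%:R / N%:R)).
apply: K_down (K_small (s := [set vf a; vf a.+1; top_vertex p]) _); last first.
  rewrite (leq_trans (leq_card_setU _ _)) // cards1 addn1 ltnS.
  by rewrite (leq_trans (leq_card_setU _ _)) // !cards1.
rewrite finset.subUset; apply/andP; split; apply/fintype.subsetP => j.
  move=> /supp_interp[k [kN hk]]; rewrite /w (negbTE (inner' k kN hk)).
  rewrite supp_delta inE => /eqP->.
  by case: (hat_active u0 hk) => ->; rewrite !inE eqxx ?orbT.
move=> /supp_interp[k [kN hk]]; rewrite /w' (negbTE (inner' k kN hk)).
by rewrite supp_delta inE => /eqP->; rewrite !inE eqxx ?orbT.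
Qed.

Let endpointN : endpoint N. Proof. by rewrite /endpoint leqnn orbT. Qed.

Let g_ends : g 0 = p /\ g 1 = p.
Proof. by rewrite /g mulr0 mulr1 interp0 (interp_nat _ (leqnn N)) /w endpointN. Qed.

Let c_ends : c 0 = p /\ c 1 = p.
Proof. by rewrite /c mulr0 mulr1 interp0 (interp_nat _ (leqnn N)) /w' endpointN. Qed.

Let P k s := nth p [:: f s; g s; c s] k.

Let P_simplex s k : I s -> simplex (P k s).
Proof.
move=> Is; case: k => [|[|[|k]]]; rewrite /P /= ?nth_nil.
- exact: f_simplex.
- exact: simplex_interp w_simplex (scaled_range Is).
- exact: simplex_interp w'_simplex (scaled_range Is).
- exact: p_simplex.
Qed.

Let P_face s a : I s -> supp (P a s) :|: supp (P a.+1 s) \in K.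
Proof.
move=> Is; case: a => [|[|[|a]]]; rewrite /P /= ?nth_nil.
- by apply: K_down (f_face Is); rewrite finset.subUset subxx supp_g.
- exact: supp_gc.
- by apply: K_down (f_face I0); rewrite finset.subUset subxx supp_c.
- by rewrite finset.setUid; exact: f_face I0.
Qed.

Let P_ends k : P k 0 = p /\ P k 1 = p.
Proof.
have [g0 g1] := g_ends; have [c0 c1] := c_ends.
by case: k => [|[|[|k]]]; rewrite /P /= ?nth_nil ?g0 ?g1 ?c0 ?c1 // /p f_loop.
Qed.

Let P_cvg k (z : R * R) : I z.1 ->
  (fun y => P k y.1) @ within (I `*` I) (nbhs z) --> P k z.1.
Proof.
move=> Iz; case: k => [|[|[|k]]]; rewrite /P /= ?nth_nil; last exact: cvg_cst.
- apply: cvg_comp _ _ (@cvg_fst_within _ _ I I z) _.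
  exact: (subspace_continuousP I f).1 f_cont _ Iz.
- apply: cvg_within_continuous => y; apply: continuous_comp; first exact: cvg_fst.
  exact: interp_continuous.
- apply: cvg_within_continuous => y; apply: continuous_comp; first exact: cvg_fst.
  exact: interp_continuous.
Qed.

Lemma loop_contraction_fine : exists H : R * R -> 'rV[R]_n.+1,
    {within I `*` I, continuous H} /\ (forall z, (I `*` I) z -> X (H z)) /\
    (forall s, I s -> H (s, 0) = f s /\ H (s, 1) = f 0) /\
    (forall t, I t -> H (0, t) = f 0 /\ H (1, t) = f 0).
Proof.
exists (fun z => interp 3%N (P ^~ z.1) (3 * z.2)); split; [|split; [|split]].
- apply/subspace_continuousP => z [Iz _].
  apply: (cvg_interp (Q := fun k z => P k z.1) (u := fun z => 3 * z.2)) => [k|].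
    exact: P_cvg.
  by apply: cvgM; [exact: cvg_cst | apply: cvg_within_continuous => y; exact: cvg_snd].
- move=> [s t] [/= Is /unit_intervalP/andP[t0 t1]].
  apply: realization_interp => // [k|a|]; [exact: P_simplex | exact: P_face |].
  by apply/andP; split; lra.
- by move=> s Is; rewrite /= mulr0 mulr1 interp0 (interp_nat _ (leqnn 3)).
- move=> t /unit_intervalP/andP[t0 t1].
  have t3 : 0 <= 3 * t <= 3 by apply/andP; split; lra.
  by split; apply: interp_cst t3 => k; have [] := P_ends k.
Qed.

End FixedSubdivision.

Lemma loop_contraction : exists H : R * R -> 'rV[R]_n.+1,
    {within I `*` I, continuous H} /\ (forall z, (I `*` I) z -> X (H z)) /\
    (forall s, I s -> H (s, 0) = f s /\ H (s, 1) = f 0) /\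
    (forall t, I t -> H (0, t) = f 0 /\ H (1, t) = f 0).
Proof. by have [N N0 Nfine] := fine_subdivision; exact: loop_contraction_fine N0 Nfine. Qed.

End LoopContraction.

Lemma realization_simply_connected : @simply_connected R _ X.
Proof.
split; first exact: realization_neq0.
by split; [exact: realization_path | exact: loop_contraction].
Qed.

End Realization.

Unset Implicit Arguments.

Theorem mainTheorem20 (R : realType) (r n : nat) :
  (3 <= r)%N -> (2 * r + 3 <= n)%N ->
  @simply_connected R ('rV[R]_n : topologicalType)
    (realization R n (Delta2t (@Cnr n r))).
Proof.
move=> r3; case: n => [|n] rn; first lia.
apply: realization_simply_connected; first exact: Delta2t_down_closed.
by move=> s s3; apply: Cnr_small_face => //; lia.
Qed.
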